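(* Let $(\theta_t)_{t\in\mathbb R}$ be a smooth green path and $t_0<t_1$. If $X_0\in\mathcal W(\theta_{t_0})$ and $X_1\in\mathcal W(\theta_{t_1})$, then every strict morphism $X_0\to X_1$ is zero. Moreover, for each $t$, every strict morphism between two non-isomorphic objects of $\mathcal W_0(\theta_t)$ is zero.
   Context: Let $\Lambda$ be a finite dimensional algebra over a field with $n$ isoclasses of simple modules, and $\mathrm{mod}\text-\Lambda$ the category of finitely generated right $\Lambda$-modules. Fix a torsion class $\mathcal G\subseteq\mathrm{mod}\text-\Lambda$ (closed under isomorphisms, extensions and quotients). For $B\in\mathcal G$, a subobject of $B$ is a submodule in $\mathcal G$; a subobject $A\subseteq B$ is strict if $A\cap B'\in\mathcal G$ for every subobject $B'$ of $B$; a strict quotient of $B$ is $B/A$ with $A$ a strict subobject. A strict morphism is a homomorphism $f:A\to B$ with $A,B\in\mathcal G$ such that $\ker f\in\mathcal G$ is a strict subobject of $A$ and $\operatorname{im} f$ is a strict subobject of $B$. Let $V_\Lambda=\mathrm{Hom}_{\mathbb Z}(K_0\Lambda,\mathbb R)\cong\mathbb R^n$; $\theta(M)$ denotes $\theta$ applied to the dimension vector of $M$. For $M\in\mathcal G$, $D_{\mathcal G}(M)$ is the set of $\theta$ with $\theta(M)=0$ and $\theta(M')\le0$ for every strict subobject $M'$ of $M$. $\mathcal W(\theta)$ is the class of $X\in\mathcal G$ with $\theta\in D_{\mathcal G}(X)$, and $\mathcal W_0(\theta)$ is the class of nonzero $X\in\mathcal W(\theta)$ such that no nonzero proper strict subobject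 of $X$ lies in $\mathcal W(\theta)$. A smooth green path is a smooth map $t\mapsto\theta_t$, $\mathbb R\to V_\Lambda$, such that: (1) whenever $\theta_{t_0}\in D_{\mathcal G}(M)$ for some nonzero $M\in\mathcal G$, $\frac{d}{dt}\theta_t(M)|_{t=t_0}>0$; (2) there is $T$ such that $\theta_t(M)>0$ for all $t>T$ and all nonzero $M\in\mathcal G$; (3) there is $T'$ such that $\theta_t(M)<0$ for all $t<T'$ and all nonzero $M\in\mathcal G$. *)

From HB Require Import structures.
From mathcomp Require Import all_boot all_order all_algebra all_field.
From mathcomp Require Import all_classical all_reals all_analysis.
Set Implicit Arguments. Unset Strict Implicit. Unset Printing Implicit Defensive.
Import Order.TTheory GRing.Theory Num.Theory.
Local Open Scope ring_scope.

Section Reps.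
Variables (K : fieldType) (A : falgType K).

(* Raw data of a finite dimensional right A-module: a K-space K^d (row
   vectors) with a right action  v . a = v *m ract a. *)
Record rep := Rep { rdim : nat; ract : A -> 'M[K]_rdim }.

Definition is_rep (M : rep) : Prop :=
  [/\ forall (k : K) (a b : A), ract M (k *: a + b) = k *: ract M a + ract M b,
      ract M 1 = 1%:M &
      forall a b : A, ract M (a * b) = ract M a *m ract M b].

Definition is_hom (M N : rep) (f : 'M[K]_(rdim M, rdim N)) : Prop :=
  forall a : A, ract M a *m f = f *m ract N a.

Definition stable (M : rep) r (U : 'M[K]_(r, rdim M)) : Prop :=
  forall a : A, (U *m ract M a <= U)%MS.

Definition subrep (M : rep) r (U : 'M[K]_(r, rdim M)) : rep :=
  @Rep (\rank U) (fun a => row_base U *m ract M a *m pinvmx (row_base U)).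

Definition ses (L M N : rep) (f : 'M[K]_(rdim L, rdim M))
  (g : 'M[K]_(rdim M, rdim N)) : Prop :=
  [/\ is_rep L, is_rep M, is_rep N, is_hom f & is_hom g] /\
  [/\ row_free f, row_full g & (f == kermx g)%MS].

Definition rep_iso (M N : rep) : Prop :=
  exists (f : 'M[K]_(rdim M, rdim N)) (g : 'M[K]_(rdim N, rdim M)),
    [/\ is_hom f, is_hom g, f *m g = 1%:M & g *m f = 1%:M].

Definition torsion_class (G : rep -> Prop) : Prop :=
  [/\ (forall M N, is_rep M -> is_rep N -> rep_iso M N -> G M -> G N),
      (forall L M N f g, @ses L M N f g -> G L -> G N -> G M) &
      (forall M N (g : 'M[K]_(rdim M, rdim N)),
          is_rep M -> is_rep N -> is_hom g -> row_full g -> G M -> G N)].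

Variable G : rep -> Prop.

Definition subobj (B : rep) r (U : 'M[K]_(r, rdim B)) : Prop :=
  stable U /\ G (subrep U).

Definition strict_sub (B : rep) r (U : 'M[K]_(r, rdim B)) : Prop :=
  subobj U /\
  forall r' (U' : 'M[K]_(r', rdim B)), subobj U' -> G (subrep (U :&: U')%MS).

Definition strict_mor (X Y : rep) (f : 'M[K]_(rdim X, rdim Y)) : Prop :=
  [/\ is_hom f, G X, G Y, strict_sub (kermx f) & strict_sub f].

(* V_Lambda = Hom_Z(K_0 Lambda, R): functions on modules additive on
   short exact sequences (universal property of K_0). *)
Definition additive_fun (R : realType) (th : rep -> R) : Prop :=
  forall L M N f g, @ses L M N f g -> th M = th L + th N.

Definition D_G (R : realType) (th : rep -> R) (M : rep) : Prop :=
  th M = 0 /\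
  forall r (U : 'M[K]_(r, rdim M)), strict_sub U -> th (subrep U) <= 0.

Definition W (R : realType) (th : rep -> R) (X : rep) : Prop :=
  [/\ is_rep X, G X & D_G th X].

Definition W0 (R : realType) (th : rep -> R) (X : rep) : Prop :=
  [/\ W th X, (0 < rdim X)%N &
      forall r (U : 'M[K]_(r, rdim X)), strict_sub U ->
        (0 < \rank U < rdim X)%N -> ~ W th (subrep U)].

Definition smooth_fun (R : realType) (h : R -> R) : Prop :=
  forall (n : nat) (x : R), derivable (derive1n n h) x 1.

Definition green_path (R : realType) (theta : R -> rep -> R) : Prop :=
  [/\ forall t, additive_fun (theta t),
      forall M, is_rep M -> smooth_fun (fun t => theta t M),
      (forall t0 M, is_rep M -> G M -> (0 < rdim M)%N -> D_G (theta t0) M ->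
          0 < derive1 (fun t => theta t M) t0),
      (exists T, forall t M, T < t -> is_rep M -> G M -> (0 < rdim M)%N ->
          0 < theta t M) &
      (exists T', forall t M, t < T' -> is_rep M -> G M -> (0 < rdim M)%N ->
          theta t M < 0)].

End Reps.

From HB Require Import structures.
From mathcomp Require Import all_boot all_order all_algebra all_field.
From mathcomp Require Import all_classical all_reals all_analysis.
From mathcomp Require Import lra zify.
Set Implicit Arguments. Unset Strict Implicit. Unset Printing Implicit Defensive.
Import Order.TTheory GRing.Theory Num.Theory numFieldNormedType.Exports.
Local Open Scope ring_scope.

(* If theta_b lies in D(Y), then every nonzero strict subobject U of Y has
   theta_a(U) < 0 for all a < b.  Otherwise t |-> theta_t(U), which is >= 0 at a
   and <= 0 at b (and increasing at b if it vanishes there, U being then in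
   W(theta_b)), has a zero t in [a, b) at which it does not increase.  By the
   green condition U is not in W(theta_t), so some strict subobject V of U has
   theta_t(V) > 0; V is a smaller nonzero strict subobject of Y, and induction
   on the dimension gives a contradiction.
   For a strict morphism f : X0 -> X1 this applies to U = im f, for which
   theta_t0(im f) = - theta_t0(ker f) >= 0; hence f = 0.  For X, Y in W0(theta_t)
   both ker f and im f lie in W(theta_t), so minimality makes a nonzero f
   injective and surjective. *)

Section Crossing.
Local Open Scope classical_set_scope.
Variable R : realType.
Implicit Types (h : R -> R) (a b x : R).

Lemma derive1_gt0_incr h x : derivable h x 1 -> 0 < h^`() x ->
  exists2 e : R, 0 < e & forall y, 0 < y -> y < e -> h (x - y) < h x < h (x + y).
Proof.
rewrite derive1E => dh dh0.
have : \forall z \near (0:R)^', 0 < z^-1 *: ((h \o shift x) z%:A - h x).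
  exact: cvgr_gt dh _ dh0.
move=> /nbhs_ballP[e e0 He]; exists e => // y y0 ye.
have slope_pos z : z != 0 -> `|z| < e -> 0 < z^-1 * (h (z + x) - h x).
  move=> z0 ze; have := He z; rewrite /ball /= sub0r normrN [_%:A]mulr1.
  exact.
have := slope_pos y; have := slope_pos (- y).
rewrite normrN gtr0_norm // oppr_eq0 gt_eqF // invrN mulNr oppr_gt0.
rewrite pmulr_rlt0 ?pmulr_rgt0 ?invr_gt0 // => /(_ isT ye) hl /(_ isT ye) hr.
by rewrite addrC (addrC x); apply/andP; split; lra.
Qed.

Lemma continuous_lt0_ball h x : {for x, continuous h} -> h x < 0 ->
  exists2 e : R, 0 < e & forall y, `|x - y| < e -> h y < 0.
Proof. by move=> hc /(cvgr_lt _ hc)/nbhs_ballP[e e0 He]; exists e. Qed.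

Lemma continuous_gt0_ball h x : {for x, continuous h} -> 0 < h x ->
  exists2 e : R, 0 < e & forall y, `|x - y| < e -> 0 < h y.
Proof. by move=> hc /(cvgr_gt _ hc)/nbhs_ballP[e e0 He]; exists e. Qed.

Lemma exists_small_step (e a b : R) : 0 < e -> a < b ->
  exists y, [/\ 0 < y, y < e & a + y < b].
Proof.
by move=> e0 ab; case: (lerP e (b - a)) => eba;
  [exists (e / 2) | exists ((b - a) / 2)]; split; lra.
Qed.

Lemma last_zero_crossing h a b : (forall x, derivable h x 1) -> a < b ->
  0 <= h a -> h b <= 0 -> (h b = 0 -> 0 < h^`() b) ->
  exists2 t, a <= t < b & h t = 0 /\ h^`() t <= 0.
Proof.
move=> hd ab ha hb hb0.
have hc x : {for x, continuous h}.
  by apply: differentiable_continuous; apply/derivable1_diffP.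
have [b' /andP[ab' b'b] hb'] : exists2 b', a < b' <= b & h b' < 0.
  have [hblt0|hbge0] := ltrP (h b) 0; first by exists b; rewrite ?ab ?lexx.
  have hbz : h b = 0 by apply/eqP; rewrite eq_le hb hbge0.
  have [e e0 He] := derive1_gt0_incr (hd b) (hb0 hbz).
  have [y [y0 ye yba]] := exists_small_step e0 ab.
  have /andP[hby _] := He y y0 ye.
  by exists (b - y); [apply/andP; split; lra | rewrite -hbz].
pose S := [set x | a <= x <= b' /\ 0 <= h x].
have hS : has_sup S.
  by split; [exists a; rewrite /S /= lexx ltW | exists b' => x [/andP[]]].
pose t := sup S.
have ta : a <= t by apply: sup_upper_bound => //; rewrite /S /= lexx ltW.
have tb' : t <= b' by apply: ge_sup => //; [exists a; rewrite /S /= lexx ltW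
  | move=> x [/andP[]]].
have ht0 : 0 <= h t.
  rewrite leNgt; apply/negP => /(continuous_lt0_ball (hc t))[d d0 Hd].
  have [x Sx tx] : exists2 x, S x & t - d < x := sup_adherent d0 hS.
  have xt : x <= t := sup_upper_bound hS Sx.
  case: Sx => _ hx.
  by have := Hd x; rewrite ger0_norm ?subr_ge0 //; lra.
have tltb' : t < b'.
  by rewrite lt_neqAle tb' andbT; apply/eqP => tb; move: hb'; rewrite -tb; lra.
have ht : h t = 0.
  apply/eqP; rewrite eq_le ht0 andbT leNgt; apply/negP.
  move=> /(continuous_gt0_ball (hc t))[d d0 Hd].
  have [y [y0 yd yb]] := exists_small_step d0 tltb'.
  have : S (t + y).
    split; first by apply/andP; split; lra.
    by apply/ltW/Hd; rewrite opprD addrA subrr sub0r normrN gtr0_norm.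
  by move/(sup_upper_bound hS); rewrite -/t; lra.
exists t; first by apply/andP; split; lra.
split => //; rewrite leNgt; apply/negP => /(derive1_gt0_incr (hd t))[e e0 He].
have [y [y0 ye yb]] := exists_small_step e0 tltb'.
have /andP[_ hty] := He y y0 ye.
have : S (t + y) by split; [apply/andP; split; lra | rewrite -ht ltW].
by move/(sup_upper_bound hS); rewrite -/t; lra.
Qed.

End Crossing.

Section Modules.
Variables (K : fieldType) (A : falgType K).
Implicit Types (M N P Q : rep A).

Definition zero_rep : rep A := @Rep K A 0 (fun=> 0).

Lemma zero_rep_is_rep : is_rep zero_rep.
Proof. by split=> *; rewrite [LHS]flatmx0 [RHS]flatmx0. Qed.

Lemma is_hom_mul M N P (f : 'M[K]_(rdim M, rdim N)) (g : 'M[K]_(rdim N, rdim P)) :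
  is_hom f -> is_hom g -> is_hom (f *m g).
Proof. by move=> Hf Hg a; rewrite mulmxA Hf -mulmxA Hg mulmxA. Qed.

Lemma rep_iso_of_bij M N (f : 'M[K]_(rdim M, rdim N)) :
  is_hom f -> row_free f -> row_full f -> rep_iso M N.
Proof.
move=> Hf ff_f ffull_f; exists f, (pinvmx f).
have fK := mulmxVp ff_f; have Kf := mulVpmx ffull_f; split=> // a.
by rewrite -[LHS]mul1mx -Kf -mulmxA (mulmxA f) -Hf -mulmxA fK mulmx1.
Qed.

Lemma rep_iso_bij M N : rep_iso M N ->
  exists f : 'M[K]_(rdim M, rdim N), [/\ is_hom f, row_free f & row_full f].
Proof.
move=> [f [g [Hf _ fg gf]]]; exists f; split=> //.
- by rewrite /row_free eqn_leq rank_leq_row -{1}(mxrank1 K (rdim M)) -fg mxrankM_maxl.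
- by rewrite /row_full eqn_leq rank_leq_col -{1}(mxrank1 K (rdim N)) -gf mxrankM_maxr.
Qed.

Lemma rep_iso_sym M N : rep_iso M N -> rep_iso N M.
Proof. by move=> [f [g [? ? ? ?]]]; exists g, f. Qed.

Lemma mxrank_mulmx_pinv m n p (E : 'M[K]_(m, n)) (B : 'M[K]_(p, n)) :
  (E <= B)%MS -> \rank (E *m pinvmx B) = \rank E.
Proof.
move=> /mulmxKpV EB; apply/eqP; rewrite eqn_leq mxrankM_maxl /=.
by rewrite -[X in (\rank X <= _)%N]EB mxrankM_maxl.
Qed.

Lemma stable_cap M r s (U : 'M[K]_(r, rdim M)) (V : 'M[K]_(s, rdim M)) :
  stable U -> stable V -> stable (U :&: V)%MS.
Proof.
move=> HU HV a; rewrite sub_capmx.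
by rewrite (submx_trans (submxMr _ (capmxSl _ _)) (HU a))
  (submx_trans (submxMr _ (capmxSr _ _)) (HV a)).
Qed.

Lemma capmx_mulmx_pinv m n p q (W : 'M[K]_(m, n)) (B : 'M[K]_(n, p))
    (C : 'M[K]_(q, p)) :
  row_free B -> (C <= B)%MS -> ((W :&: C *m pinvmx B) *m B == W *m B :&: C)%MS.
Proof.
move=> fB CB; apply/andP; split.
  by apply: submx_trans (capmxMr _ _ _) _; rewrite mulmxKpV.
have vWB : (W *m B :&: C <= W *m B)%MS := capmxSl _ _.
have vB := submx_trans vWB (submxMl _ _).
rewrite -(mulmxKpV vB) submxMr // sub_capmx submxMr ?capmxSr // andbT.
by rewrite -[X in (_ <= X)%MS](mulmxKp fB) submxMr.
Qed.

Section Subrep.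
Variables (M : rep A) (r : nat) (U : 'M[K]_(r, rdim M)).

Lemma is_hom_corestr P (E : 'M[K]_(rdim P, rdim M)) : is_hom E -> (E <= U)%MS ->
  @is_hom K A P (subrep U) (E *m pinvmx (row_base U)).
Proof.
move=> HE EU a /=; have EUb : (E <= row_base U)%MS by rewrite eq_row_base.
(* [pinvmx] unfolds to a product, so it is abstracted before rewriting with
   [mulmxA]; the same device is used below. *)
move: (mulmxKpV EUb) (HE a); move: (pinvmx _) => p.
move: (row_base U) => B EpB HEa.
by rewrite mulmxA HEa !mulmxA EpB.
Qed.

Lemma rep_iso_subrep P (E : 'M[K]_(rdim P, rdim M)) :
  is_hom E -> row_free E -> (E == U)%MS -> rep_iso P (subrep U).
Proof.
move=> HE fE /andP[EU UE]; apply: rep_iso_of_bij (is_hom_corestr HE EU) _ _.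
  by rewrite /row_free mxrank_mulmx_pinv ?eq_row_base.
by rewrite /row_full mxrank_mulmx_pinv ?eq_row_base //; apply/eqP/eqmx_rank/andP.
Qed.

Lemma rep_iso_subrep_full : \rank U = rdim M -> rep_iso M (subrep U).
Proof.
move=> rU; apply: (@rep_iso_subrep M 1%:M).
- by move=> a; rewrite mulmx1 mul1mx.
- by rewrite /row_free mxrank1.
- by rewrite sub1mx submx1 andbT /row_full rU.
Qed.

Hypothesis stU : stable U.

Lemma row_base_stable a : (row_base U *m ract M a <= row_base U)%MS.
Proof. by rewrite (eqmxMr _ (eq_row_base U)) (eq_row_base U) stU. Qed.

Lemma subrep_is_rep : is_rep M -> is_rep (subrep U).
Proof.
have rbK := mulmxVp (row_base_free U).
case=> Hlin H1 Hmul; split=> /=.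
- move=> k a b; rewrite Hlin mulmxDr mulmxDl.
  by rewrite -scalemxAr -scalemxAl.
- by rewrite H1 mulmx1 rbK.
- move=> a b; rewrite Hmul; move: (mulmxKpV (row_base_stable a)).
  by move: (pinvmx _) => p; move: (row_base U) => B E; rewrite !mulmxA E.
Qed.

Lemma row_base_is_hom : @is_hom K A (subrep U) M (row_base U).
Proof. by move=> a /=; rewrite mulmxKpV // row_base_stable. Qed.

Lemma stable_subrep s (V : 'M[K]_(s, \rank U)) :
  @stable K A (subrep U) s V -> stable (V *m row_base U).
Proof.
move=> stV a.
have -> : V *m row_base U *m ract M a =
    V *m (row_base U *m ract M a *m pinvmx (row_base U)) *m row_base U.
  by rewrite -[RHS]mulmxA mulmxKpV ?row_base_stable // [RHS]mulmxA.
exact/submxMr/stV.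
Qed.

End Subrep.

Lemma rep_iso_subrep_subrep M r (U : 'M[K]_(r, rdim M)) s (V : 'M[K]_(s, \rank U))
    q (Vm : 'M[K]_(q, rdim M)) :
  stable U -> @stable K A (subrep U) s V -> (V *m row_base U == Vm)%MS ->
  rep_iso (@subrep K A (subrep U) s V) (subrep Vm).
Proof.
move=> stU stV VVm; apply: rep_iso_subrep.
- exact: is_hom_mul (row_base_is_hom stV) (row_base_is_hom stU).
- by rewrite /row_free mxrankMfree ?row_base_free //; apply: row_base_free.
- by apply/eqmxP/(eqmx_trans (eqmxMr _ (eq_row_base V)))/eqmxP.
Qed.

Lemma stable_kermx M N (f : 'M[K]_(rdim M, rdim N)) : is_hom f -> stable (kermx f).
Proof. by move=> Hf a; rewrite sub_kermx -mulmxA Hf mulmxA mulmx_ker mul0mx. Qed.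

Lemma stable_hom_image M N (f : 'M[K]_(rdim M, rdim N)) : is_hom f -> stable f.
Proof. by move=> Hf a; rewrite -Hf submxMl. Qed.

Section Additive.
Variables (R : realType) (th : rep A -> R).
Hypothesis th_add : additive_fun th.

Lemma additive_fun_dim0 M : is_rep M -> rdim M = 0%N -> th M = 0.
Proof.
move=> HM M0.
suff : th M = th M + th M by lra.
have free0 : row_free (0 : 'M[K]_(rdim M)) by rewrite /row_free mxrank0 M0.
apply: (@th_add M M M 0 0); split; split=> //.
1,2: by move=> a; rewrite mul0mx mulmx0.
by move: free0; rewrite -kermx_eq0 => /eqP ->; rewrite sub0mx.
Qed.

Lemma additive_fun_iso P Q : is_rep P -> is_rep Q -> rep_iso P Q -> th P = th Q.
Proof.
move=> HP HQ /rep_iso_bij[f [Hf free_f full_f]].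
have := @th_add zero_rep P Q 0 f.
rewrite (additive_fun_dim0 zero_rep_is_rep) // add0r; apply; split; split=> //.
- exact: zero_rep_is_rep.
- by move=> a; rewrite mulmx0 mul0mx.
- by rewrite /row_free mxrank0.
- by move: free_f; rewrite -kermx_eq0 => /eqP ->; rewrite !sub0mx.
Qed.

Lemma additive_fun_ker_im M N (f : 'M[K]_(rdim M, rdim N)) :
  is_rep M -> is_rep N -> is_hom f ->
  th M = th (subrep (kermx f)) + th (subrep f).
Proof.
move=> HM HN Hf; have stK := stable_kermx Hf; have stI := stable_hom_image Hf.
have fb : (f <= row_base f)%MS by rewrite eq_row_base.
have ker_corestr : (kermx f == kermx (f *m pinvmx (row_base f)))%MS.
  move: (mulmxKpV fb); move: (pinvmx _) => p; move: (row_base f) => B fpB.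
  rewrite !sub_kermx mulmxA mulmx_ker mul0mx eqxx /=.
  by rewrite -[X in _ *m X]fpB mulmxA mulmx_ker mul0mx.
apply: (@th_add (subrep (kermx f)) M (subrep f)
  (row_base (kermx f)) (f *m pinvmx (row_base f))); split; split.
- exact: subrep_is_rep stK HM.
- exact: HM.
- exact: subrep_is_rep stI HN.
- exact: row_base_is_hom stK.
- exact: is_hom_corestr Hf (submx_refl f).
- exact: row_base_free.
- by rewrite /row_full mxrank_mulmx_pinv.
- exact/eqmxP/(eqmx_trans (eq_row_base _))/eqmxP.
Qed.

Lemma additive_fun_subrep_subrep M r (U : 'M[K]_(r, rdim M)) s
    (V : 'M[K]_(s, \rank U)) :
  is_rep M -> stable U -> @stable K A (subrep U) s V ->
  th (@subrep K A (subrep U) s V) = th (subrep (V *m row_base U)).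
Proof.
move=> HM stU stV; apply: additive_fun_iso.
- exact/(subrep_is_rep stV)/subrep_is_rep.
- exact/subrep_is_rep/HM/stable_subrep.
- by apply: rep_iso_subrep_subrep; rewrite ?submx_refl.
Qed.

End Additive.

Section TorsionClass.
Variable G : rep A -> Prop.
Hypothesis tcG : torsion_class G.

Lemma torsion_class_iso P Q : is_rep P -> is_rep Q -> rep_iso P Q -> G P -> G Q.
Proof. by case: tcG => iso_closed _ _; apply: iso_closed. Qed.

Lemma strict_sub_trans Y r (U : 'M[K]_(r, rdim Y)) s (W : 'M[K]_(s, \rank U)) :
  is_rep Y -> strict_sub G U -> @strict_sub K A G (subrep U) s W ->
  strict_sub G (W *m row_base U).
Proof.
move=> HY [[stU _] strU] [[stW GW] strW].
have repU := subrep_is_rep stU HY.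
have G_transfer s' (V : 'M[K]_(s', \rank U)) q (Vm : 'M[K]_(q, rdim Y)) :
    @stable K A (subrep U) s' V -> stable Vm -> (V *m row_base U == Vm)%MS ->
    G (@subrep K A (subrep U) s' V) -> G (subrep Vm).
  move=> stV stVm VVm; apply: torsion_class_iso.
  - exact: subrep_is_rep stV repU.
  - exact: subrep_is_rep stVm HY.
  - exact: rep_iso_subrep_subrep.
have stWU := stable_subrep stU stW.
split; first by split=> //; apply: G_transfer GW; rewrite ?submx_refl.
move=> r' U' [stU' GU'].
pose C := (U :&: U')%MS.
have stC : stable C := stable_cap stU stU'.
have CU : (C <= row_base U)%MS by rewrite eq_row_base capmxSl.
pose X := C *m pinvmx (row_base U).
have XC : X *m row_base U = C := mulmxKpV CU.
have stX : @stable K A (subrep U) _ X.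
  move=> a /=; move: XC; rewrite /X.
  move: (pinvmx _) => p; move: (row_base U) => B XC.
  by rewrite !mulmxA XC submxMr.
have GX : G (@subrep K A (subrep U) _ X).
  apply: torsion_class_iso (strU _ _ (conj stU' GU')).
  - exact: subrep_is_rep stC HY.
  - exact: subrep_is_rep stX repU.
  - by apply/rep_iso_sym/rep_iso_subrep_subrep; rewrite ?XC ?submx_refl.
apply: G_transfer (strW _ _ (conj stX GX)).
- exact: stable_cap stW stX.
- exact: stable_cap stWU stU'.
have /capmx_idPl WU : (W *m row_base U <= U)%MS.
  by rewrite (submx_trans (submxMl _ _)) ?eq_row_base.
have /eqmxP WXC := capmx_mulmx_pinv W (row_base_free U) CU.
apply/eqmxP; apply: eqmx_trans WXC _; rewrite /C capmxA.
exact: cap_eqmx WU (eqmx_refl _).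
Qed.

End TorsionClass.

Section Semistable.
Variables (G : rep A -> Prop) (R : realType) (th : rep A -> R).
Hypotheses (tcG : torsion_class G) (th_add : additive_fun th).

Lemma D_G_strict_sub Y r (U : 'M[K]_(r, rdim Y)) :
  is_rep Y -> D_G G th Y -> strict_sub G U -> th (subrep U) = 0 ->
  D_G G th (subrep U).
Proof.
move=> HY [_ DY] HU thU; split=> // s W HW.
rewrite (additive_fun_subrep_subrep th_add HY HU.1.1 HW.1.1).
exact: DY (strict_sub_trans tcG HY HU HW).
Qed.

Lemma W0_strict_sub_rank Z r (V : 'M[K]_(r, rdim Z)) :
  W0 G th Z -> strict_sub G V -> th (subrep V) = 0 ->
  \rank V = 0%N \/ \rank V = rdim Z.
Proof.
move=> [[HZ _ DZ] _ minZ] HV thV.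
have WV : W G th (subrep V).
  split; [exact: subrep_is_rep HV.1.1 HZ | exact: HV.1.2 |].
  exact: D_G_strict_sub.
have [|rV0] := posnP (\rank V); [by left | right].
apply/eqP; rewrite eqn_leq rank_leq_col leqNgt; apply/negP => rVZ.
by apply: minZ HV _ WV; rewrite rV0 rVZ.
Qed.

Lemma strict_mor_W0_eq0 X Y (f : 'M[K]_(rdim X, rdim Y)) :
  W0 G th X -> W0 G th Y -> ~ rep_iso X Y -> strict_mor G f -> f = 0.
Proof.
move=> W0X W0Y not_iso [Hf _ _ Hk Hi].
have [[HX _ [thX DX]] X0 _] := W0X; have [[HY _ [_ DY]] _ _] := W0Y.
have := additive_fun_ker_im th_add HX HY Hf.
have := DX _ _ Hk; have := DY _ _ Hi => thI thK thKI.
have thK0 : th (subrep (kermx f)) = 0 by lra.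
have thI0 : th (subrep f) = 0 by lra.
apply: contrapT => /eqP f0; apply: not_iso.
have rf : (0 < \rank f)%N by rewrite lt0n mxrank_eq0.
have rfX := rank_leq_row f; have rfY := rank_leq_col f.
apply: (rep_iso_of_bij Hf); apply/eqP.
- by case: (W0_strict_sub_rank W0X Hk thK0); rewrite mxrank_ker; lia.
- by case: (W0_strict_sub_rank W0Y Hi thI0); lia.
Qed.

End Semistable.

End Modules.

Section GreenPath.
Variables (K : fieldType) (A : falgType K) (G : rep A -> Prop).
Variables (R : realType) (theta : R -> rep A -> R).
Hypotheses (tcG : torsion_class G) (gp : green_path G theta).

Lemma green_path_additive t : additive_fun (theta t).
Proof. by case: gp. Qed.

Lemma strict_sub_theta_lt0 Y (b : R) : is_rep Y -> D_G G (theta b) Y ->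
  forall r (U : 'M[K]_(r, rdim Y)) a, strict_sub G U -> (0 < \rank U)%N ->
  a < b -> theta a (subrep U) < 0.
Proof.
move=> HY DY r U; have [n] := ubnP (\rank U).
elim: n r U => // n IH r U /ltnSE rUn a HU rU0 ab.
have [[stU GU] _] := HU; have repU := subrep_is_rep stU HY.
have [_ smooth dpos _ _] := gp.
pose h t := theta t (subrep U).
have hd x : derivable h x 1 := smooth _ repU 0%N x.
have hpos t : D_G G (theta t) (subrep U) -> 0 < derive1 h t :=
  dpos t _ repU GU rU0.
rewrite ltNge; apply/negP => ha.
have [t /andP[_ tb] [ht dt]] := last_zero_crossing hd ab ha (DY.2 _ _ HU)
  (fun hb => hpos b (D_G_strict_sub tcG (green_path_additive b) HY DY HU hb)).
have [s [W [HW Wpos]]] : exists s (W : 'M[K]_(s, \rank U)),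
    @strict_sub K A G (subrep U) s W /\ 0 < theta t (@subrep K A (subrep U) s W).
  apply: contrapT => noW; suff: 0 < derive1 h t by rewrite ltNge dt.
  apply: hpos; split=> // s W HW; rewrite leNgt; apply/negP => Wp.
  by apply: noW; exists s, W.
have repW := subrep_is_rep HW.1.1 repU.
have rWU : (\rank W < \rank U)%N.
  rewrite ltn_neqAle rank_leq_col andbT; apply/negP => /eqP rW.
  have := additive_fun_iso (green_path_additive t) repU repW
    (@rep_iso_subrep_full _ _ (subrep U) _ W rW).
  by rewrite -/(h t) ht; lra.
have rW0 : (0 < \rank W)%N.
  rewrite lt0n; apply: contraTneq Wpos => rW0.
  by rewrite (additive_fun_dim0 (green_path_additive t) repW rW0) ltxx.
have := IH _ (W *m row_base U) _ t (strict_sub_trans tcG HY HU HW).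
rewrite mxrankMfree ?row_base_free //.
rewrite -(additive_fun_subrep_subrep (green_path_additive t) HY stU HW.1.1).
by move=> /(_ (leq_trans rWU rUn) rW0 tb); lra.
Qed.

Lemma strict_mor_W_eq0 t0 t1 X0 X1 (f : 'M[K]_(rdim X0, rdim X1)) :
  t0 < t1 -> W G (theta t0) X0 -> W G (theta t1) X1 -> strict_mor G f -> f = 0.
Proof.
move=> t01 [HX0 _ [th0 D0]] [HX1 _ D1] [Hf _ _ Hk Hi].
apply: contrapT => /eqP f0.
have rf : (0 < \rank f)%N by rewrite lt0n mxrank_eq0.
have := strict_sub_theta_lt0 HX1 D1 Hi rf t01.
have := additive_fun_ker_im (green_path_additive t0) HX0 HX1 Hf.
by have := D0 _ _ Hk; lra.
Qed.

End GreenPath.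

Theorem mainTheorem17 (K : fieldType) (A : falgType K) (G : rep A -> Prop)
  (R : realType) (theta : R -> rep A -> R) :
  torsion_class G -> green_path G theta ->
  (forall (t0 t1 : R) (X0 X1 : rep A) (f : 'M[K]_(rdim X0, rdim X1)),
      t0 < t1 -> W G (theta t0) X0 -> W G (theta t1) X1 ->
      strict_mor G f -> f = 0) /\
  (forall (t : R) (X Y : rep A) (f : 'M[K]_(rdim X, rdim Y)),
      W0 G (theta t) X -> W0 G (theta t) Y -> ~ rep_iso X Y ->
      strict_mor G f -> f = 0).
Proof.
move=> tcG gp; split=> [|t]; first exact: strict_mor_W_eq0.
exact: strict_mor_W0_eq0 tcG (green_path_additive gp t).
Qed.
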